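(* There exists a QCQP in $N=2$ variables with $m=2$ constraints such that: Assumptions A and B hold; the quadratic eigenvalue multiplicity is $k=1$; $k\ge\operatorname{affdim}(\{b(\gamma):\gamma\in\mathcal F\})+1$ for every semidefinite face $\mathcal F$ of $\Gamma$; but $\mathrm{Opt}\neq\mathrm{Opt}_{\mathrm{SDP}}$ (and hence $\operatorname{conv}(\mathcal D)\neq\mathcal D_{\mathrm{SDP}}$).
   Context: A QCQP is given by integers $N\ge 1$, $m_I,m_E\ge 0$, $m:=m_I+m_E\ge 1$ and, for $i\in[0,m]$ ($[a,b]=\{a,\dots,b\}$, $[n]=[1,n]$), $q_i(x)=x^\top A_ix+2b_i^\top x+c_i$ with $A_i\in\mathbb S^N$, $b_i\in\mathbb R^N$, $c_i\in\mathbb R$. $\mathrm{Opt}:=\inf\{q_0(x): q_i(x)\le 0\ \forall i\in[m_I],\ q_i(x)=0\ \forall i\in[m_I+1,m]\}$; $\mathcal D:=\{(x,t): q_0(x)\le 2t$ and the same constraints$\}$. With $Q_i=\begin{pmatrix}c_i& b_i^\top\\ b_i& A_i\end{pmatrix}$: $\mathrm{Opt}_{\mathrm{SDP}}:=\inf\{\langle Q_0,Y\rangle: Y=\begin{pmatrix}1&x^\top\\ x& X\end{pmatrix}\succeq 0,\ X\in\mathbb S^N,\ \langle Q_i,Y\rangle\le 0\ \forall i\in[m_I],\ \langle Q_i,Y\rangle=0\ \forall i\in[m_I+1,m]\}$; $\mathcal D_{\mathrm{SDP}}:=\{(x,t):\exists X$ with $Y\succeq0$, $\langle Q_0,Y\rangle\le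 2t$ and the same constraints$\}$. $A(\gamma)=A_0+\sum\gamma_iA_i$, $b(\gamma)=b_0+\sum\gamma_ib_i$, $q(\gamma,x)=q_0(x)+\sum\gamma_iq_i(x)$; $\Gamma:=\{\gamma\in\mathbb R^m: A(\gamma)\succeq0,\ \gamma_i\ge0\ \forall i\in[m_I]\}$. Assumption A: the QCQP feasible set is nonempty and some $\gamma^*$ with $\gamma^*_i\ge0$ ($i\in[m_I]$) has $A(\gamma^* )\succ0$. Assumption B: for every $\hat x$, if $\sup_{\gamma\in\Gamma}q(\gamma,\hat x)$ is finite it is attained. A nonempty face $\mathcal F$ of $\Gamma$ is semidefinite if no $\gamma\in\mathcal F$ has $A(\gamma)\succ0$. The quadratic eigenvalue multiplicity is the largest integer $k$ (with $N=nk$) such that each $A_i=I_k\otimes\mathcal A_i$ for some $\mathcal A_i\in\mathbb S^n$. $\operatorname{affdim}$ is the dimension of the affine hull. *)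

From Stdlib Require Import Reals Lra Lia Arith.
Open Scope R_scope.

(* Vectors in R^n are functions nat -> R (only coordinates 0..n-1 matter;
   elements of R^n are represented by functions vanishing outside 0..n-1).
   Matrices are nat -> nat -> R. *)
Definition vec := nat -> R.
Definition mat := nat -> nat -> R.

Fixpoint rsum (n : nat) (f : nat -> R) : R :=
  match n with O => 0 | S n' => rsum n' f + f n' end.

Definition dot (n : nat) (x y : vec) : R := rsum n (fun i => x i * y i).
Definition quad (n : nat) (A : mat) (x : vec) : R :=
  rsum n (fun i => rsum n (fun j => x i * A i j * x j)).
Definition frob (n : nat) (A X : mat) : R :=
  rsum n (fun i => rsum n (fun j => A i j * X i j)).

Definition symm (n : nat) (A : mat) : Prop :=
  forall i j, (i < n)%nat -> (j < n)%nat -> A i j = A j i.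
Definition psd (n : nat) (A : mat) : Prop := forall x : vec, 0 <= quad n A x.
Definition pd (n : nat) (A : mat) : Prop :=
  forall x : vec, (exists i, (i < n)%nat /\ x i <> 0) -> 0 < quad n A x.

Definition suppv (n : nat) (x : vec) : Prop := forall i, (n <= i)%nat -> x i = 0.
Definition suppm (n : nat) (X : mat) : Prop :=
  forall i j, (n <= i)%nat \/ (n <= j)%nat -> X i j = 0.

(* QCQP data: index 0 = objective, indices 1..m = constraints,
   1..mI inequalities, mI+1..m equalities. *)
Record qcqp := Qcqp {
  qN : nat; qmI : nat; qmE : nat;
  qA : nat -> mat; qb : nat -> vec; qc : nat -> R }.

Definition qm (P : qcqp) : nat := (qmI P + qmE P)%nat.

Definition wf (P : qcqp) : Prop :=
  (1 <= qN P)%nat /\ (1 <= qm P)%nat /\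
  forall i, (i <= qm P)%nat -> symm (qN P) (qA P i).

Definition qi (P : qcqp) (i : nat) (x : vec) : R :=
  quad (qN P) (qA P i) x + 2 * dot (qN P) (qb P i) x + qc P i.

Definition feasible (P : qcqp) (x : vec) : Prop :=
  suppv (qN P) x /\
  (forall i, (1 <= i <= qmI P)%nat -> qi P i x <= 0) /\
  (forall i, (qmI P + 1 <= i <= qm P)%nat -> qi P i x = 0).

Inductive ExtR := ERfin (r : R) | ERminf | ERpinf.

Definition IsInfE (S : R -> Prop) (v : ExtR) : Prop :=
  match v with
  | ERfin r => (forall s, S s -> r <= s) /\
               (forall l, (forall s, S s -> l <= s) -> l <= r)
  | ERminf => forall M, exists s, S s /\ s < M
  | ERpinf => forall s, ~ S s
  end.

Definition opt_values (P : qcqp) (v : R) : Prop :=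
  exists x, feasible P x /\ v = qi P 0 x.

(* Q_i = [[c_i, b_i^T],[b_i, A_i]] and Y = [[1, x^T],[x, X]] as (N+1)x(N+1) *)
Definition Qmat (P : qcqp) (i : nat) : mat := fun p q =>
  match p, q with
  | O, O => qc P i
  | O, S q' => qb P i q'
  | S p', O => qb P i p'
  | S p', S q' => qA P i p' q'
  end.

Definition Ymat (x : vec) (X : mat) : mat := fun p q =>
  match p, q with
  | O, O => 1
  | O, S q' => x q'
  | S p', O => x p'
  | S p', S q' => X p' q'
  end.

Definition sdp_feasible (P : qcqp) (x : vec) (X : mat) : Prop :=
  suppv (qN P) x /\ suppm (qN P) X /\ symm (qN P) X /\
  psd (S (qN P)) (Ymat x X) /\
  (forall i, (1 <= i <= qmI P)%nat -> frob (S (qN P)) (Qmat P i) (Ymat x X) <= 0) /\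
  (forall i, (qmI P + 1 <= i <= qm P)%nat -> frob (S (qN P)) (Qmat P i) (Ymat x X) = 0).

Definition sdp_values (P : qcqp) (v : R) : Prop :=
  exists x X, sdp_feasible P x X /\ v = frob (S (qN P)) (Qmat P 0) (Ymat x X).

Definition Dset (P : qcqp) (p : vec * R) : Prop :=
  feasible P (fst p) /\ qi P 0 (fst p) <= 2 * snd p.

Definition Dsdp (P : qcqp) (p : vec * R) : Prop :=
  exists X, sdp_feasible P (fst p) X /\
    frob (S (qN P)) (Qmat P 0) (Ymat (fst p) X) <= 2 * snd p.

Definition conv (Sv : vec * R -> Prop) (p : vec * R) : Prop :=
  exists (n : nat) (l : nat -> R) (pts : nat -> vec * R),
    (forall i, (i < n)%nat -> 0 <= l i /\ Sv (pts i)) /\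
    rsum n l = 1 /\
    (forall j, fst p j = rsum n (fun i => l i * fst (pts i) j)) /\
    snd p = rsum n (fun i => l i * snd (pts i)).

(* multipliers gamma in R^m: functions supported on indices 1..m *)
Definition suppg (m : nat) (g : vec) : Prop :=
  forall i, (i = 0%nat \/ (m < i)%nat) -> g i = 0.

Definition Agam (P : qcqp) (g : vec) : mat := fun i j =>
  qA P 0 i j + rsum (qm P) (fun k => g (S k) * qA P (S k) i j).
Definition bgam (P : qcqp) (g : vec) : vec := fun i =>
  qb P 0 i + rsum (qm P) (fun k => g (S k) * qb P (S k) i).
Definition qgam (P : qcqp) (g : vec) (x : vec) : R :=
  qi P 0 x + rsum (qm P) (fun k => g (S k) * qi P (S k) x).

Definition Gamma (P : qcqp) (g : vec) : Prop :=
  suppg (qm P) g /\ psd (qN P) (Agam P g) /\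
  (forall i, (1 <= i <= qmI P)%nat -> 0 <= g i).

Definition AssumptionA (P : qcqp) : Prop :=
  (exists x, feasible P x) /\
  (exists g, suppg (qm P) g /\ (forall i, (1 <= i <= qmI P)%nat -> 0 <= g i) /\
             pd (qN P) (Agam P g)).

Definition AssumptionB (P : qcqp) : Prop :=
  forall xh : vec, suppv (qN P) xh ->
    (exists g, Gamma P g) ->
    (exists M, forall g, Gamma P g -> qgam P g xh <= M) ->
    exists g0, Gamma P g0 /\ forall g, Gamma P g -> qgam P g xh <= qgam P g0 xh.

(* I_k (x) B for B an n x n matrix: block diagonal with k copies of B *)
Definition kron_id (n : nat) (B : mat) : mat := fun p q =>
  if Nat.eqb (p / n) (q / n) then B (p mod n) (q mod n) else 0.

Definition has_mult (P : qcqp) (k : nat) : Prop :=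
  exists n, qN P = (n * k)%nat /\
    forall i, (i <= qm P)%nat ->
      exists B, symm n B /\
        forall p q, (p < qN P)%nat -> (q < qN P)%nat -> qA P i p q = kron_id n B p q.

Definition quad_eig_mult (P : qcqp) (k : nat) : Prop :=
  has_mult P k /\ forall k', has_mult P k' -> (k' <= k)%nat.

Definition comb (t : R) (x y : vec) : vec := fun i => t * x i + (1 - t) * y i.

Definition is_face (P : qcqp) (F : vec -> Prop) : Prop :=
  (forall g, F g -> Gamma P g) /\
  (forall x y t, F x -> F y -> 0 <= t <= 1 -> F (comb t x y)) /\
  (forall x y t, Gamma P x -> Gamma P y -> 0 < t < 1 -> F (comb t x y) ->
     F x /\ F y).

Definition semidef_face (P : qcqp) (F : vec -> Prop) : Prop :=
  is_face P F /\ (exists g, F g) /\ (forall g, F g -> ~ pd (qN P) (Agam P g)).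

(* affine dimension of S ⊆ R^n: dimension of the affine hull, i.e.
   d such that S contains d+1 but not d+2 affinely independent points *)
Definition aff_indep (n d : nat) (p : nat -> vec) : Prop :=
  forall a : nat -> R,
    (forall j, (j < n)%nat -> rsum d (fun i => a i * (p (S i) j - p 0%nat j)) = 0) ->
    forall i, (i < d)%nat -> a i = 0.

Definition has_aff_indep (n d : nat) (Sv : vec -> Prop) : Prop :=
  exists p : nat -> vec, (forall i, (i <= d)%nat -> Sv (p i)) /\ aff_indep n d p.

Definition affdim (n : nat) (Sv : vec -> Prop) (d : nat) : Prop :=
  has_aff_indep n d Sv /\ ~ has_aff_indep n (S d) Sv.

Definition bset (P : qcqp) (F : vec -> Prop) (v : vec) : Prop :=
  exists g, F g /\ v = bgam P g.

(* The counterexample is  min x^2 + y^2 + 2y  s.t.  x^2 - y^2 = 1, 2xy = 0,  whose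
   feasible points are (+-1, 0), so Opt = 1.  The two constraints are the real and
   imaginary parts of z^2 = 1 (z = x + iy), hence the multiplier set Gamma is the
   closed unit disk; in particular Gamma has an interior point with A(gamma) > 0,
   and since b_1 = b_2 = 0 the vector b(gamma) is constant, so every face has
   affdim 0.  The moment relaxation, however, may take x = (0, -1/2) with
   X = diag(5/4, 1/4), reaching 1/2, and 1/2 is optimal: the first constraint turns
   the objective into 1 + 2 (X_yy + y), while Y >= 0 forces X_yy + y >= -1/4.
   Assumption B holds because on the disk q(gamma, x) = q_0(x) + <gamma, (q_1(x),
   q_2(x))> is maximised at the normalised vector (q_1(x), q_2(x)). *)
From Stdlib Require Import Reals.
From Stdlib Require Import Lra Lia Psatz.
Open Scope R_scope.

Lemma rsum_weighted_lb n (l t : nat -> R) c :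
  (forall i, (i < n)%nat -> 0 <= l i /\ c <= t i) ->
  c * rsum n l <= rsum n (fun i => l i * t i).
Proof.
  induction n as [|n IHn]; intros H; cbn; [lra|].
  destruct (H n ltac:(lia)) as [Hl Ht].
  assert (c * rsum n l <= rsum n (fun i => l i * t i)) by (apply IHn; intros; apply H; lia).
  nra.
Qed.

Lemma conv_snd_lb (Sv : vec * R -> Prop) c p :
  (forall q, Sv q -> c <= snd q) -> conv Sv p -> c <= snd p.
Proof.
  intros Hlb [n [l [pts [Hpts [Hl [_ ->]]]]]].
  rewrite <- (Rmult_1_r c), <- Hl.
  apply rsum_weighted_lb. intros i Hi.
  destruct (Hpts i Hi) as [H0 HS]. split; [exact H0|]. exact (Hlb _ HS).
Qed.

Lemma IsInfE_min (Sv : R -> Prop) s0 :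
  Sv s0 -> (forall s, Sv s -> s0 <= s) -> IsInfE Sv (ERfin s0).
Proof. intros H0 Hlb. split; [exact Hlb|]. intros l Hl. exact (Hl s0 H0). Qed.

Lemma affdim_single_point n (Sv : vec -> Prop) v0 :
  Sv v0 -> (forall v, Sv v -> forall j, v j = v0 j) -> affdim n Sv 0.
Proof.
  intros H0 Hone. split.
  - exists (fun _ => v0). split; [intros; exact H0|]. intros a _ i Hi. lia.
  - intros [p [Hp Hind]].
    assert (E : 1 = 0).
    { refine (Hind (fun _ => 1) _ 0%nat _); [|lia]. intros j _. cbn.
      rewrite (Hone _ (Hp 0%nat ltac:(lia))), (Hone _ (Hp 1%nat ltac:(lia))). ring. }
    lra.
Qed.

Lemma unit_disk_dot_le g1 g2 a b r :
  g1 * g1 + g2 * g2 <= 1 -> a * a + b * b <= r * r -> 0 <= r -> g1 * a + g2 * b <= r.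
Proof.
  intros Hg Hab Hr.
  (* Lagrange's identity: the Cauchy-Schwarz defect is a square *)
  assert (CS : (g1 * a + g2 * b) * (g1 * a + g2 * b) <= (g1 * g1 + g2 * g2) * (a * a + b * b)).
  { assert (0 <= (g1 * b - g2 * a) * (g1 * b - g2 * a)) by apply Rle_0_sqr. nra. }
  assert ((g1 * a + g2 * b) * (g1 * a + g2 * b) <= r * r) by nra.
  nra.
Qed.

Definition ex_A (i : nat) : mat :=
  match i with
  | O => fun p q => match p, q with O, O => 1 | S O, S O => 1 | _, _ => 0 end
  | S O => fun p q => match p, q with O, O => 1 | S O, S O => -1 | _, _ => 0 end
  | S (S O) => fun p q => match p, q with O, S O => 1 | S O, O => 1 | _, _ => 0 end
  | _ => fun _ _ => 0
  end.
Definition ex_b (i : nat) : vec :=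
  match i with O => fun j => match j with S O => 1 | _ => 0 end | _ => fun _ => 0 end.
Definition ex_c (i : nat) : R := match i with S O => -1 | _ => 0 end.
Definition ex_qcqp : qcqp := Qcqp 2 0 2 ex_A ex_b ex_c.

Ltac destruct_indices_lt2 :=
  let i := fresh in let j := fresh in let hi := fresh in let hj := fresh in
  intros i j hi hj; destruct i as [|[|i]]; destruct j as [|[|j]]; try lia; reflexivity.

Lemma ex_wf : wf ex_qcqp.
Proof.
  split; [cbn; lia|]. split; [cbn; lia|].
  intros i Hi; cbn in Hi. destruct i as [|[|[|i]]]; try lia; cbn; destruct_indices_lt2.
Qed.

Lemma ex_objective_ge1 x : feasible ex_qcqp x -> 1 <= qi ex_qcqp 0 x.
Proof.
  intros [_ [_ Heq]].
  pose proof (Heq 1%nat ltac:(cbn; lia)) as H1.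
  pose proof (Heq 2%nat ltac:(cbn; lia)) as H2.
  unfold qi, quad, dot in *; cbn in *.
  assert (Hy : x 1%nat = 0).
  { destruct (Req_dec (x 0%nat) 0) as [E|E].
    - rewrite E in H1. nra.
    - apply (Rmult_eq_reg_l (x 0%nat)); [nra|exact E]. }
  rewrite Hy in *. nra.
Qed.

Definition ex_x_opt : vec := fun i => match i with O => 1 | _ => 0 end.

Lemma ex_x_opt_feasible : feasible ex_qcqp ex_x_opt.
Proof.
  split; [|split].
  - intros i Hi; cbn in Hi. destruct i as [|[|i]]; try lia; reflexivity.
  - intros i Hi; cbn in Hi; lia.
  - intros i Hi; cbn in Hi. unfold qi, quad, dot.
    destruct i as [|[|[|i]]]; try lia; cbn; lra.
Qed.

Lemma ex_opt : IsInfE (opt_values ex_qcqp) (ERfin 1).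
Proof.
  apply IsInfE_min.
  - exists ex_x_opt. split; [exact ex_x_opt_feasible|]. unfold qi, quad, dot; cbn; lra.
  - intros s [x [Hx ->]]. exact (ex_objective_ge1 x Hx).
Qed.

Lemma ex_Agam_psd_disk g :
  psd 2 (Agam ex_qcqp g) -> g 1%nat * g 1%nat + g 2%nat * g 2%nat <= 1.
Proof.
  intros H.
  pose proof (H (fun i => match i with O => g 2%nat | S O => -(1 + g 1%nat) | _ => 0 end)) as Ha.
  pose proof (H (fun i => match i with O => 1 - g 1%nat | S O => - g 2%nat | _ => 0 end)) as Hb.
  unfold quad, Agam in *; cbn in *. nra.
Qed.

Lemma ex_disk_Agam_psd g :
  g 1%nat * g 1%nat + g 2%nat * g 2%nat <= 1 -> psd 2 (Agam ex_qcqp g).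
Proof.
  intros H y. unfold quad, Agam; cbn.
  set (u := y 0%nat). set (v := y 1%nat).
  (* y^T A(gamma) y = |w|^2 + <gamma, (Re w^2, Im w^2)>  with  w = u + iv *)
  assert (Hdot : - (g 1%nat * (u * u - v * v) + g 2%nat * (2 * u * v)) <= u * u + v * v).
  { replace (- (g 1%nat * (u * u - v * v) + g 2%nat * (2 * u * v)))
      with ((- g 1%nat) * (u * u - v * v) + (- g 2%nat) * (2 * u * v)) by ring.
    apply unit_disk_dot_le; nra. }
  nra.
Qed.

Lemma ex_assumptionA : AssumptionA ex_qcqp.
Proof.
  split; [exists ex_x_opt; exact ex_x_opt_feasible|].
  exists (fun _ => 0). split; [intros i _; reflexivity|].
  split; [intros i Hi; cbn in Hi; lia|].
  intros y [i [Hi Hy]]. unfold quad, Agam; cbn in *.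
  destruct i as [|[|i]]; try lia.
  - assert (0 < y 0%nat * y 0%nat) by (apply Rsqr_pos_lt; exact Hy). nra.
  - assert (0 < y 1%nat * y 1%nat) by (apply Rsqr_pos_lt; exact Hy). nra.
Qed.

Lemma ex_qgam g x :
  qgam ex_qcqp g x = qi ex_qcqp 0 x + (g 1%nat * qi ex_qcqp 1 x + g 2%nat * qi ex_qcqp 2 x).
Proof. unfold qgam; cbn [qm ex_qcqp qmI qmE Nat.add rsum]. ring. Qed.

Lemma ex_Gamma_of_disk g1 g2 :
  g1 * g1 + g2 * g2 <= 1 ->
  Gamma ex_qcqp (fun i => match i with S O => g1 | S (S O) => g2 | _ => 0 end).
Proof.
  intros H. split; [|split].
  - intros i [->|Hi]; [reflexivity|]. cbn in Hi. destruct i as [|[|[|i]]]; try lia; reflexivity.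
  - apply ex_disk_Agam_psd. exact H.
  - intros i Hi; cbn in Hi; lia.
Qed.

Lemma ex_assumptionB : AssumptionB ex_qcqp.
Proof.
  intros x _ _ _.
  set (a := qi ex_qcqp 1 x). set (b := qi ex_qcqp 2 x).
  set (r := sqrt (a * a + b * b)).
  assert (Hr : 0 <= r) by apply sqrt_pos.
  assert (Hrr : r * r = a * a + b * b) by (apply sqrt_sqrt; nra).
  assert (Hbound : forall g, Gamma ex_qcqp g -> g 1%nat * a + g 2%nat * b <= r).
  { intros g [_ [Hpsd _]]. apply unit_disk_dot_le; [apply ex_Agam_psd_disk|lra|]; assumption. }
  destruct (Req_dec r 0) as [Hr0|Hr0].
  - eexists. split.
    + exact (ex_Gamma_of_disk 0 0 ltac:(lra)).
    + intros g Hg. rewrite !ex_qgam. fold a b. cbv beta iota.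
      specialize (Hbound g Hg). lra.
  - exists (fun i => match i with S O => a / r | S (S O) => b / r | _ => 0 end). split.
    + apply ex_Gamma_of_disk.
      replace (a / r * (a / r) + b / r * (b / r)) with ((a * a + b * b) / (r * r)) by (field; lra).
      rewrite <- Hrr. unfold Rdiv. rewrite Rinv_r; [lra|nra].
    + intros g Hg. rewrite !ex_qgam. fold a b. cbv beta iota.
      assert (Hmax : a / r * a + b / r * b = r).
      { replace (a / r * a + b / r * b) with ((a * a + b * b) / r) by (field; lra).
        rewrite <- Hrr. field. lra. }
      specialize (Hbound g Hg). lra.
Qed.

Lemma ex_quad_eig_mult : quad_eig_mult ex_qcqp 1.
Proof.
  split.
  - exists 2%nat. split; [reflexivity|].
    intros i Hi. exists (ex_A i). split.
    + cbn in Hi. destruct i as [|[|[|i]]]; try lia; cbn; destruct_indices_lt2.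
    + intros p q Hp Hq; cbn in Hp, Hq.
      destruct p as [|[|p]]; destruct q as [|[|q]]; try lia; reflexivity.
  - intros k [n [Hn Hk]]. cbn in Hn.
    destruct k as [|[|k]]; [lia|lia|].
    destruct n as [|[|n]]; [lia| |lia].
    destruct k as [|k]; [|lia].
    (* with k = 2 each A_i would be a multiple of I_2, but A_1 = diag(1, -1) *)
    destruct (Hk 1%nat ltac:(cbn; lia)) as [B [_ HB]].
    pose proof (HB 0%nat 0%nat ltac:(cbn; lia) ltac:(cbn; lia)) as E0.
    pose proof (HB 1%nat 1%nat ltac:(cbn; lia) ltac:(cbn; lia)) as E1.
    cbn in E0, E1. lra.
Qed.

Lemma ex_bgam_const g j : bgam ex_qcqp g j = ex_b 0 j.
Proof. unfold bgam. cbn. ring. Qed.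

Lemma ex_faces_affdim0 F : (exists g, F g) -> affdim (qN ex_qcqp) (bset ex_qcqp F) 0.
Proof.
  intros [g Fg]. apply (affdim_single_point _ _ (bgam ex_qcqp g)).
  - exists g. split; [exact Fg|reflexivity].
  - intros v [h [_ ->]] j. rewrite !ex_bgam_const. reflexivity.
Qed.

Definition ex_x_sdp : vec := fun i => match i with S O => -1/2 | _ => 0 end.
Definition ex_X_sdp : mat :=
  fun i j => match i, j with O, O => 5/4 | S O, S O => 1/4 | _, _ => 0 end.

Lemma ex_sdp_point_feasible : sdp_feasible ex_qcqp ex_x_sdp ex_X_sdp.
Proof.
  split; [|split; [|split; [|split; [|split]]]].
  - intros i Hi; cbn in Hi. destruct i as [|[|i]]; try lia; reflexivity.
  - intros i j Hij; cbn in Hij. destruct i as [|[|i]]; destruct j as [|[|j]]; try lia; reflexivity.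
  - cbn. destruct_indices_lt2.
  - intros v. unfold quad; cbn.
    assert (0 <= (v 0%nat - v 2%nat / 2) ^ 2) by apply pow2_ge_0.
    assert (0 <= v 1%nat ^ 2) by apply pow2_ge_0. lra.
  - intros i Hi; cbn in Hi; lia.
  - intros i Hi; cbn in Hi. unfold frob.
    destruct i as [|[|[|i]]]; try lia; cbn; lra.
Qed.

Lemma ex_sdp_point_value : frob 3 (Qmat ex_qcqp 0) (Ymat ex_x_sdp ex_X_sdp) = 1/2.
Proof. unfold frob; cbn; lra. Qed.

Lemma ex_sdp_objective_ge_half x X :
  sdp_feasible ex_qcqp x X -> 1/2 <= frob 3 (Qmat ex_qcqp 0) (Ymat x X).
Proof.
  intros [_ [_ [_ [Hpsd [_ Heq]]]]].
  pose proof (Heq 1%nat ltac:(cbn; lia)) as H1.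
  pose proof (Hpsd (fun i => match i with O => 1/2 | S (S O) => 1 | _ => 0 end)) as Hq.
  unfold frob, quad in *; cbn in *. lra.
Qed.

Lemma ex_sdp_opt : IsInfE (sdp_values ex_qcqp) (ERfin (1/2)).
Proof.
  apply IsInfE_min.
  - exists ex_x_sdp, ex_X_sdp. split; [exact ex_sdp_point_feasible|].
    symmetry. exact ex_sdp_point_value.
  - intros s [x [X [Hx ->]]]. exact (ex_sdp_objective_ge_half x X Hx).
Qed.

Lemma ex_Dset_snd_ge_half q : Dset ex_qcqp q -> 1/2 <= snd q.
Proof. intros [Hf Hq]. pose proof (ex_objective_ge1 _ Hf). lra. Qed.

Lemma ex_conv_D_ne_Dsdp : ~ (conv (Dset ex_qcqp) (ex_x_sdp, 1/4) <-> Dsdp ex_qcqp (ex_x_sdp, 1/4)).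
Proof.
  intros [_ Hsdp].
  assert (Hconv : conv (Dset ex_qcqp) (ex_x_sdp, 1/4)).
  { apply Hsdp. exists ex_X_sdp. split; [exact ex_sdp_point_feasible|].
    cbn [fst snd qN ex_qcqp]. rewrite ex_sdp_point_value. lra. }
  pose proof (conv_snd_lb _ _ _ ex_Dset_snd_ge_half Hconv) as Hlb.
  cbn in Hlb. lra.
Qed.

Theorem mainTheorem16 :
  exists P : qcqp,
    qN P = 2%nat /\ qm P = 2%nat /\ wf P /\
    AssumptionA P /\ AssumptionB P /\
    quad_eig_mult P 1%nat /\
    (forall F, semidef_face P F ->
       exists d, affdim (qN P) (bset P F) d /\ (d + 1 <= 1)%nat) /\
    (exists v1 v2, IsInfE (opt_values P) v1 /\ IsInfE (sdp_values P) v2 /\ v1 <> v2) /\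
    (exists p, ~ (conv (Dset P) p <-> Dsdp P p)).
Proof.
  exists ex_qcqp.
  split; [reflexivity|]. split; [reflexivity|].
  split; [exact ex_wf|]. split; [exact ex_assumptionA|]. split; [exact ex_assumptionB|].
  split; [exact ex_quad_eig_mult|].
  split.
  - intros F [_ [HF _]]. exists 0%nat. split; [exact (ex_faces_affdim0 F HF)|lia].
  - split.
    + exists (ERfin 1), (ERfin (1/2)). split; [exact ex_opt|]. split; [exact ex_sdp_opt|].
      intros E. injection E. lra.
    + exists (ex_x_sdp, 1/4). exact ex_conv_D_ne_Dsdp.
Qed.
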